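(* In the setting described in the context, the mapping $\psi^a$ is a monotone $\gamma$-CRS with regards to $h$.
   Context: Let $I=\{1,\dots,n\}$ be a set of items, $B$ a positive integer, $[B]=\{1,\dots,B\}$, $[0;B]=\{0,1,\dots,B\}$; for $u,w\in[0;B]^I$, $u\le w$ means coordinatewise. Let $f:[0;B]^I\to\mathbb{R}_{\ge0}$ be monotone and lattice submodular ($f(u\vee s\mathbf{1}_i)-f(u)\ge f(w\vee s\mathbf{1}_i)-f(w)$ for all $u\le w$, $s\in[0;B]$, $i\in I$, with $\vee$ the coordinatewise max and $\mathbf{1}_i$ the $i$-th unit vector). Each item $i$ has a random state $\Phi(i)\in[B]$, independent across items, with known distribution $p_i(s)=\Pr[\Phi(i)=s]$. Item $i$ in state $s$ has a nonnegative integer cost $c_i(s)$, with $c_i(s)\ge c_i(s')$ whenever $s\ge s'$. $C$ is a positive integer budget and $\mathcal{I}^{out}\subseteq 2^I$ is a downward-closed family. For $S\subseteq I$ and a realization $\phi\in[B]^I$, $\phi_S\in[0;B]^I$ equals $\phi(i)$ for $i\in S$ and $0$ otherwise; $\overline{f}(S)=\mathbb{E}[f(\Phi_S)]$, and $F(\overline{x})=\sum_{U\subseteq I}\prod_{i\in U}\overline{x}(i)\prod_{i\notin U}(1-\overline{x}(i))\overline{f}(U)$ is the multilinear extension. Let $P_{\mathcal{I}^{out}}=\mathrm{conv}\{\mathbf{1}_S: S\in\mathcal{I}^{out}\}$. (β,γ)-balanced CRS: for $\beta,\gamma\in[0,1]$, a monotone $(\beta,\gamma)$-balanced CRS for $\mathcal{I}^{out}$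 is a (possibly randomized) scheme that, for any $\overline{z}\in\beta\cdot P_{\mathcal{I}^{out}}$ and the random set $R$ containing each $i$ independently with probability $\overline{z}(i)$, maps $R$ to $\chi(R)\subseteq R$ with $\chi(R)\in\mathcal{I}^{out}$, such that $\Pr[i\in\chi(R)\mid i\in R]\ge\gamma$ for all $i$ (probability over $R$ and the scheme's randomness), and monotone: for $i\in R\subseteq R'$, $\Pr[i\in\chi(R)]\ge\Pr[i\in\chi(R')]$. Problem P1: variables $x(i,t)\ge0$ for $i\in I$, $t\in\{1,\dots,C-c_i(B)\}$, with $\overline{x}(i)=\sum_{t=1}^{C-c_i(B)}x(i,t)$; maximize $F(\overline{x})$ subject to $\overline{x}(i)\le1$, $\overline{x}\in P_{\mathcal{I}^{out}}$, and for all $t\in\{1,\dots,C\}$: $\sum_{i\in I}\mathbb{E}[\min\{c_i(\Phi(i)),t\}]\sum_{t'=1}^{t}x(i,t')\le 2t$. Assume a monotone $(\beta,\gamma)$-balanced CRS $\chi^{io}$ for $\mathcal{I}^{out}$ exists. Let $y$ be the solution of P1 computed by the stochastic continuous greedy algorithm of Asadpour and Nazerzadeh (2016) with stopping time $l=\min\{\beta,1/4\}$ and step size $\delta=o(n^{-3})$, with $\overline{y}(i)=\sum_t y(i,t)$. Distribution $h$: the random vector $v\in[0;B]^I$ has independent coordinates with $\Pr[v(i)=j]=h(i,j)=p_i(j)\overline{y}(i)$ for $j\in[B]$ and $\Pr[v(i)=0]=h(i,0)=1-\overline{y}(i)$. Let $R(v)=\{i: v(i)\ne0\}$. Mapping $\psi^a$: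 apply $\chi^{io}$ (with $\overline{z}=\overline{y}$) to $R(v)$; set $\psi^a(v)(i)=v(i)$ if $i\in\chi^{io}(R(v))$ and $\psi^a(v)(i)=0$ otherwise. An $\alpha$-CRS with regards to $h$ is a (possibly randomized) mapping $\psi$ on $[0;B]^I$ with $\psi(v)(i)\in\{0,v(i)\}$ for all $i$, and $\Pr[\psi(v)(i)=j\mid v(i)=j]\ge\alpha$ for all $i\in I$, $j\in[B]$ (probability over $v\sim h$ and the randomness of $\psi$). It is monotone if for all $u,w$ with $u(i)=w(i)$ and $u\le w$, $\Pr[\psi(u)(i)=u(i)]\ge\Pr[\psi(w)(i)=w(i)]$ (probability over the randomness of $\psi$ only). *)

(* Items I = 'I_n, states [0;B] = 'I_B.+1 (0 = "not present").
   Randomized maps are modelled by their output distributions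
   (finite supports, since everything is finite). *)
From mathcomp Require Import all_boot all_order all_algebra.
Set Implicit Arguments. Unset Strict Implicit. Unset Printing Implicit Defensive.
Import Order.TTheory GRing.Theory Num.Theory.
Local Open Scope ring_scope.

Section Defs.
Variable R : realFieldType.

Definition is_dist (A : finType) (mu : A -> R) : Prop :=
  (forall a, 0 <= mu a) /\ \sum_a mu a = 1.

Definition downward_closed n (F : pred {set 'I_n}) : Prop :=
  forall S T : {set 'I_n}, T \subset S -> F S -> F T.

(* z \in b * P_F, where P_F = conv { 1_S : S \in F } *)
Definition in_scaled_polytope n (F : pred {set 'I_n}) (b : R) (z : 'I_n -> R) : Prop :=
  exists lam : {set 'I_n} -> R,
    [/\ forall S, 0 <= lam S,
        forall S, ~~ F S -> lam S = 0,
        \sum_(S : {set 'I_n}) lam S = 1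
      & forall i, z i = b * \sum_(S : {set 'I_n} | i \in S) lam S].

Definition prob_set n (z : 'I_n -> R) (S : {set 'I_n}) : R :=
  (\prod_(i in S) z i) * \prod_(i in ~: S) (1 - z i).

(* A randomized contention resolution scheme: chi z Rs S = Pr[chi(Rs) = S]
   when the scheme is run for the vector z on the set Rs. *)
Definition crs_type n := ('I_n -> R) -> {set 'I_n} -> {set 'I_n} -> R.

Definition pr_sel n (chi : crs_type n) z (Rs : {set 'I_n}) (i : 'I_n) : R :=
  \sum_(S : {set 'I_n} | i \in S) chi z Rs S.

(* The conditional probability
   Pr[i \in chi(R) | i \in R] >= gamma is stated in multiplied-out form
   Pr[i \in chi(R) /\ i \in R] >= gamma * Pr[i \in R] (Pr[i \in R] = z i). *)
Definition monotone_balanced_CRS n (F : pred {set 'I_n}) (beta gamma : R)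
    (chi : crs_type n) : Prop :=
  forall z, in_scaled_polytope F beta z ->
  [/\ forall Rs, is_dist (chi z Rs),
      forall Rs S, 0 < chi z Rs S -> S \subset Rs /\ F S,
      forall i, \sum_(Rs : {set 'I_n} | i \in Rs) prob_set z Rs * pr_sel chi z Rs i >= gamma * z i
    & forall i (Rs Rs' : {set 'I_n}), i \in Rs -> Rs \subset Rs' ->
        pr_sel chi z Rs i >= pr_sel chi z Rs' i].

Definition hval n B (p : 'I_n -> 'I_B.+1 -> R) (ybar : 'I_n -> R)
    (i : 'I_n) (j : 'I_B.+1) : R :=
  if j == ord0 then 1 - ybar i else p i j * ybar i.

Definition hprob n B (p : 'I_n -> 'I_B.+1 -> R) (ybar : 'I_n -> R)
    (v : {ffun 'I_n -> 'I_B.+1}) : R :=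
  \prod_i hval p ybar i (v i).

(* randomized mapping on [0;B]^I : psi v w = Pr[psi(v) = w] *)
Definition vmap_type n B := {ffun 'I_n -> 'I_B.+1} -> {ffun 'I_n -> 'I_B.+1} -> R.

(* alpha-CRS with regards to the distribution hd on [0;B]^I (conditional
   probability again in multiplied-out form) *)
Definition alpha_CRS n B (hd : {ffun 'I_n -> 'I_B.+1} -> R) (psi : vmap_type n B)
    (alpha : R) : Prop :=
  [/\ forall v, is_dist (psi v),
      forall v w, 0 < psi v w -> forall i, w i = ord0 \/ w i = v i
    & forall i (j : 'I_B.+1), j != ord0 ->
        \sum_(v : {ffun 'I_n -> 'I_B.+1} | v i == j) hd v * \sum_(w : {ffun 'I_n -> 'I_B.+1} | w i == j) psi v w
          >= alpha * \sum_(v : {ffun 'I_n -> 'I_B.+1} | v i == j) hd v].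

Definition monotone_vmap n B (psi : vmap_type n B) : Prop :=
  forall i (u w : {ffun 'I_n -> 'I_B.+1}), u i = w i -> (forall k, u k <= w k)%N ->
    \sum_(x : {ffun 'I_n -> 'I_B.+1} | x i == u i) psi u x >= \sum_(x : {ffun 'I_n -> 'I_B.+1} | x i == w i) psi w x.

Definition supp_set n B (v : {ffun 'I_n -> 'I_B.+1}) : {set 'I_n} :=
  [set i | v i != ord0].

Definition restrict n B (v : {ffun 'I_n -> 'I_B.+1}) (S : {set 'I_n}) :
  {ffun 'I_n -> 'I_B.+1} := [ffun i => if i \in S then v i else ord0].

Definition psi_a n B (chi : crs_type n) (ybar : 'I_n -> R) : vmap_type n B :=
  fun v w => \sum_(S : {set 'I_n}) chi ybar (supp_set v) S * (w == restrict v S)%:R.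

End Defs.

(* Under h the support R(v) is exactly the random set of the CRS with
   marginals ybar, and on the event v(i) = j <> 0 its law is that of R
   conditioned on i \in R, scaled by p_i(j).  Since psi^a(v)(i) = v(i) iff the
   CRS keeps i, Pr[psi^a(v)(i) = j, v(i) = j] = p_i(j) Pr[i \in chi(R), i \in R]
   >= p_i(j) gamma ybar(i) = gamma Pr[v(i) = j].  Monotonicity of psi^a follows
   from that of chi, because u <= w gives R(u) \subset R(w).  The CRS may be
   used at ybar because min(beta, 1/4) P is contained in beta P when the family
   is downward closed: the missing mass is put on the empty set. *)
From mathcomp Require Import all_boot all_order all_algebra.
Set Implicit Arguments. Unset Strict Implicit. Unset Printing Implicit Defensive.
Import Order.TTheory GRing.Theory Num.Theory.
Local Open Scope ring_scope.

Lemma in_scaled_polytope_mono (R : realFieldType) n (F : pred {set 'I_n})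
    (b b' : R) (z : 'I_n -> R) :
  downward_closed F -> 0 <= b' <= b ->
  in_scaled_polytope F b' z -> in_scaled_polytope F b z.
Proof.
move=> dcF /andP[b'_ge0 b'_le_b] [lam [lam_ge0 lam_F lam_sum1 zE]].
have [b0 | b_neq0] := eqVneq b 0.
  have b'0 : b' = 0 by apply/eqP; rewrite eq_le b'_ge0 -b0 b'_le_b.
  by exists lam; split => // i; rewrite zE b'0 b0.
have F0 : F set0.
  have [S lamS_neq0] : exists S, lam S != 0.
    apply/existsP; apply: contraT; rewrite negb_exists => /forallP lam0.
    move: lam_sum1; rewrite big1 => [/eqP|S _]; first by rewrite eq_sym oner_eq0.
    exact/eqP/negPn.
  by apply: (dcF S set0 (sub0set S)); apply: contraNT lamS_neq0 => /lam_F ->.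
have b_gt0 : 0 < b by rewrite lt_def b_neq0 (le_trans b'_ge0 b'_le_b).
pose t := b' / b.
have t_ge0 : 0 <= t by rewrite divr_ge0 // ltW.
have t_le1 : t <= 1 by rewrite ler_pdivrMr // mul1r.
exists (fun S => t * lam S + (S == set0)%:R * (1 - t)); split.
- move=> S; apply: addr_ge0; first exact: mulr_ge0.
  by rewrite mulr_ge0 ?ler0n ?subr_ge0.
- move=> S notFS; have /negbTE -> : S != set0 by apply: contraNneq notFS => ->.
  by rewrite lam_F // mulr0 mul0r addr0.
- rewrite big_split /= -mulr_sumr lam_sum1 mulr1 -mulr_suml (bigD1 set0) //=.
  by rewrite big1 => [|S /negbTE ->] //; rewrite eqxx addr0 mul1r addrC subrK.
- move=> i; rewrite big_split /= -mulr_sumr [X in _ + X]big1 ?addr0.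
    by rewrite zE /t mulrA mulrCA divff ?mulr1.
  move=> S iS; have /negbTE -> : S != set0 by apply/set0Pn; exists i.
  by rewrite mul0r.
Qed.

Lemma prob_setE (R : realFieldType) n (z : 'I_n -> R) (S : {set 'I_n}) :
  prob_set z S = \prod_k (if k \in S then z k else 1 - z k).
Proof.
rewrite /prob_set [RHS](bigID (mem S)) /=; congr (_ * _).
  by apply: eq_bigr => k ->.
rewrite (eq_bigl (fun k => k \notin S)) => [|k]; last by rewrite inE.
by apply: eq_bigr => k /negbTE ->.
Qed.

Lemma subset_supp_set n B (u w : {ffun 'I_n -> 'I_B.+1}) :
  (forall k, u k <= w k)%N -> supp_set u \subset supp_set w.
Proof.
move=> le_uw; apply/subsetP => k; rewrite !inE; apply: contra => /eqP wk0.
by apply/eqP/val_inj; move: (le_uw k); rewrite wk0 leqn0 => /eqP.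
Qed.

Section HDistribution.
Variables (R : realFieldType) (n B : nat) (p : 'I_n -> 'I_B.+1 -> R) (y : 'I_n -> R).
Hypothesis p_ord0 : forall i, p i ord0 = 0.
Hypothesis p_sum1 : forall i, \sum_j p i j = 1.

Lemma sum_hprob_box (Q : 'I_n -> pred 'I_B.+1) (P : pred {ffun 'I_n -> 'I_B.+1}) :
  (forall v, P v = [forall k, Q k (v k)]) ->
  \sum_(v | P v) hprob p y v = \prod_k \sum_(j | Q k j) hval p y k j.
Proof.
move=> PE; rewrite bigA_distr_big_dep; apply: eq_bigl => v.
by rewrite PE; apply/forallP/familyP => Q_v k; exact: Q_v.
Qed.

Lemma sum_hval_neq0 k : \sum_(j | j != ord0) hval p y k j = y k.
Proof.
rewrite (eq_bigr (fun j => p k j * y k)) => [|j /negbTE j_neq0]; last first.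
  by rewrite /hval j_neq0.
rewrite -big_distrl /= -[X in _ = X]mul1r -(p_sum1 k) [in RHS](bigD1 ord0) //=.
by rewrite p_ord0 add0r.
Qed.

Lemma sum_hval k : \sum_j hval p y k j = 1.
Proof. by rewrite (bigD1 ord0) //= sum_hval_neq0 /hval eqxx subrK. Qed.

Lemma sum_hprob_coord i (j : 'I_B.+1) : j != ord0 ->
  \sum_(v : {ffun 'I_n -> 'I_B.+1} | v i == j) hprob p y v = p i j * y i.
Proof.
move=> j_neq0; rewrite (@sum_hprob_box (fun k j' => (k == i) ==> (j' == j))); last first.
  move=> v; apply/eqP/forallP => [vi k | /(_ i)]; last by rewrite eqxx => /eqP.
  by apply/implyP => /eqP ->; rewrite vi.
rewrite (bigD1 i) //= [X in _ * X]big1 => [|k /negbTE ->]; last exact: sum_hval.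
by rewrite eqxx (big_pred1 j) // /hval (negbTE j_neq0) mulr1.
Qed.

(* Fixing v(i) = j <> 0 and the support of v leaves, for every other item k,
   a factor y k (if k \in S) or 1 - y k (if not): these make up prob_set. *)
Lemma sum_hprob_coord_supp i (j : 'I_B.+1) (S : {set 'I_n}) : j != ord0 -> i \in S ->
  \sum_(v : {ffun 'I_n -> 'I_B.+1} | (v i == j) && (supp_set v == S)) hprob p y v
   = p i j * prob_set y S.
Proof.
move=> j_neq0 iS.
pose Q k j' := if k == i then j' == j else (j' != ord0) == (k \in S).
rewrite (@sum_hprob_box Q); last first.
  move=> v; apply/andP/forallP => [[/eqP vi /eqP suppE] k | Q_v].
    by rewrite /Q -suppE inE; case: eqP => [->|_]; rewrite ?vi eqxx.
  have := Q_v i; rewrite /Q eqxx => vi; split=> //; apply/eqP/setP => k.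
  rewrite inE; have := Q_v k; rewrite /Q.
  by case: eqP => [-> /eqP -> | _ /eqP]; rewrite ?j_neq0 ?iS.
rewrite prob_setE (bigD1 i) //= [in RHS](bigD1 i) //= iS mulrA.
rewrite /Q eqxx (big_pred1 j) // /hval (negbTE j_neq0); congr (_ * _).
apply: eq_bigr => k /negbTE ->; case: (k \in S).
  by rewrite (eq_bigl (fun j' => j' != ord0)) ?sum_hval_neq0 // => j'; rewrite eqb_id.
by rewrite (eq_bigl (pred1 ord0)) ?big_pred1_eq /hval ?eqxx // => j'; rewrite eqbF_neg negbK.
Qed.

End HDistribution.

Section PsiA.
Variables (R : realFieldType) (n B : nat) (chi : crs_type R n) (z : 'I_n -> R).
Hypothesis chi_dist : forall Rs, is_dist (chi z Rs).
Implicit Types (v w : {ffun 'I_n -> 'I_B.+1}).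

Lemma psi_a_dist v : is_dist (psi_a chi z v).
Proof.
have [chi_ge0 chi_sum1] := chi_dist (supp_set v).
split=> [w|]; first by apply: sumr_ge0 => S _; rewrite mulr_ge0.
rewrite /psi_a exchange_big /= -[in RHS]chi_sum1; apply: eq_bigr => S _.
rewrite -big_distrr /= (bigD1 (restrict v S)) //= eqxx [X in _ + X]big1 ?addr0 ?mulr1 //.
by move=> w /negbTE ->.
Qed.

Lemma psi_a_support v w : 0 < psi_a chi z v w -> exists S, w = restrict v S.
Proof.
move=> psi_gt0; case: (pickP (fun S => w == restrict v S)) => [S /eqP|w_other].
  by exists S.
by move: psi_gt0; rewrite /psi_a big1 ?ltxx // => S _; rewrite w_other mulr0.
Qed.

Lemma psi_a_marginal v i (j : 'I_B.+1) :
  \sum_(w : {ffun 'I_n -> 'I_B.+1} | w i == j) psi_a chi z v w =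
  \sum_(S : {set 'I_n}) chi z (supp_set v) S * (restrict v S i == j)%:R.
Proof.
rewrite /psi_a exchange_big /=; apply: eq_bigr => S _; rewrite -big_distrr /=.
rewrite big_mkcond /= (bigD1 (restrict v S)) //= big1 => [|w /negbTE ->]; last by case: ifP.
by rewrite eqxx addr0; case: (_ == j).
Qed.

Lemma psi_a_keep v i : v i != ord0 ->
  \sum_(w : {ffun 'I_n -> 'I_B.+1} | w i == v i) psi_a chi z v w
  = pr_sel chi z (supp_set v) i.
Proof.
move=> vi_neq0; rewrite psi_a_marginal /pr_sel [RHS]big_mkcond /=.
apply: eq_bigr => S _; rewrite ffunE; case: (i \in S); first by rewrite eqxx mulr1.
by rewrite eq_sym (negbTE vi_neq0) mulr0.
Qed.

Lemma psi_a_keep_ord0 v i : v i = ord0 ->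
  \sum_(w : {ffun 'I_n -> 'I_B.+1} | w i == v i) psi_a chi z v w = 1.
Proof.
move=> vi0; rewrite psi_a_marginal -[in RHS](chi_dist (supp_set v)).2.
by apply: eq_bigr => S _; rewrite ffunE vi0 if_same eqxx mulr1.
Qed.

Lemma psi_a_monotone :
  (forall i (Rs Rs' : {set 'I_n}), i \in Rs -> Rs \subset Rs' ->
     pr_sel chi z Rs i >= pr_sel chi z Rs' i) ->
  monotone_vmap (psi_a (B:=B) chi z).
Proof.
move=> chi_mono i u w uw_i le_uw.
have [ui0 | ui_neq0] := eqVneq (u i) ord0.
  by rewrite !psi_a_keep_ord0 // -uw_i.
rewrite !psi_a_keep -?uw_i //; apply: chi_mono; last exact: subset_supp_set.
by rewrite inE.
Qed.

Lemma psi_a_alpha_CRS (p : 'I_n -> 'I_B.+1 -> R) (gamma : R) :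
  (forall i j, 0 <= p i j) -> (forall i, p i ord0 = 0) ->
  (forall i, \sum_j p i j = 1) ->
  (forall i, \sum_(Rs : {set 'I_n} | i \in Rs) prob_set z Rs * pr_sel chi z Rs i
             >= gamma * z i) ->
  alpha_CRS (hprob p z) (psi_a (B:=B) chi z) gamma.
Proof.
move=> p_ge0 p_ord0 p_sum1 chi_balanced; split.
- exact: psi_a_dist.
- move=> v w /psi_a_support [S ->] i; rewrite ffunE.
  by case: (i \in S); [right | left].
move=> i j j_neq0; rewrite sum_hprob_coord // mulrCA.
rewrite (eq_bigr (fun v => hprob p z v * pr_sel chi z (supp_set v) i)); last first.
  by move=> v /eqP vi; rewrite -vi psi_a_keep // vi.
have i_supp v : v i == j -> i \in supp_set v by move=> /eqP vi; rewrite inE vi.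
rewrite (partition_big (@supp_set n B) (fun Rs => i \in Rs) i_supp) /=.
rewrite (eq_bigr (fun Rs => p i j * (prob_set z Rs * pr_sel chi z Rs i))); last first.
  move=> Rs iRs; rewrite mulrA -sum_hprob_coord_supp // big_distrl /=.
  by apply: eq_bigr => v /andP[_ /eqP ->].
by rewrite -mulr_sumr ler_wpM2l.
Qed.

End PsiA.

Theorem lemma3 (R : realFieldType) (n B : nat) (HB : (0 < B)%N)
  (p : 'I_n -> 'I_B.+1 -> R)
  (Hp_nonneg : forall i j, 0 <= p i j)
  (Hp_0 : forall i, p i ord0 = 0)
  (Hp_sum : forall i, \sum_j p i j = 1)
  (Fout : pred {set 'I_n}) (Hdc : downward_closed Fout)
  (beta gamma : R) (Hbeta : 0 <= beta <= 1) (Hgamma : 0 <= gamma <= 1)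
  (chi : crs_type R n) (Hchi : monotone_balanced_CRS Fout beta gamma chi)
  (ybar : 'I_n -> R)
  (Hy : in_scaled_polytope Fout (Num.min beta 4%:R^-1) ybar) :
  alpha_CRS (hprob p ybar) (psi_a (B:=B) chi ybar) gamma
  /\ monotone_vmap (psi_a (B:=B) chi ybar).
Proof.
have [beta_ge0 _] := andP Hbeta.
have min_le : 0 <= Num.min beta 4%:R^-1 <= beta.
  by rewrite ge_min lexx le_min beta_ge0 invr_ge0 ler0n.
have [chi_dist _ chi_balanced chi_mono] :=
  Hchi ybar (in_scaled_polytope_mono Hdc min_le Hy).
split; first exact: psi_a_alpha_CRS.
exact: psi_a_monotone.
Qed.
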